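(* Let $m\ge 2$ be an integer and let $P=(A_1,A_2,\dots,A_{m+1})$ be a cyclic $(m+1)$-gon (distinct vertices on a circle) with vertices ordered anticlockwise. Then \[ S_{1,m,m+1}\prod_{i=2}^{m-1} x_{i,m+1} = \sum_{j=1}^{m-1} S_{j,j+1,m+1}\, \frac{\prod_{k=1}^{m} x_{k,m+1}}{x_{j,m+1}\,x_{j+1,m+1}}. \]
   Context: For points $A_p=(x_p,y_p)$, $x_{pq}:=(x_q-x_p)^2+(y_q-y_p)^2$ is the squared distance between $A_p$ and $A_q$, and $S_{pqr}:=2[(x_q-x_p)(y_r-y_p)-(y_q-y_p)(x_r-x_p)]$ is four times the signed area of the triangle $A_pA_qA_r$. An empty product equals $1$. *)

From mathcomp Require Import all_boot all_order all_algebra.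
From mathcomp Require Import all_classical all_reals all_analysis.
Set Implicit Arguments. Unset Strict Implicit. Unset Printing Implicit Defensive.
Import Order.TTheory GRing.Theory Num.Theory.
Local Open Scope ring_scope.

Definition sqdist (R : realType) (A : nat -> R * R) (p q : nat) : R :=
  ((A q).1 - (A p).1) ^+ 2 + ((A q).2 - (A p).2) ^+ 2.

(* S_{pqr}: four times the signed area of triangle A_p A_q A_r *)
Definition sarea (R : realType) (A : nat -> R * R) (p q r : nat) : R :=
  2 * (((A q).1 - (A p).1) * ((A r).2 - (A p).2)
       - ((A q).2 - (A p).2) * ((A r).1 - (A p).1)).

Definition cyclic_anticlockwise (R : realType) (n : nat) (A : nat -> R * R) : Prop :=
  (forall i j, (1 <= i <= n)%N -> (1 <= j <= n)%N -> i <> j -> A i <> A j) /\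
  exists (c : R * R) (r : R) (theta : nat -> R),
    0 < r /\
    (forall i, (1 <= i <= n)%N ->
       A i = (c.1 + r * cos (theta i), c.2 + r * sin (theta i))) /\
    (forall i, (1 <= i < n)%N -> theta i < theta i.+1) /\
    theta n < theta 1%N + 2 * pi.

(* Invert in a circle centred at A_(m+1): the circle through the A_k becomes a
   line, and the image of A_k has a coordinate G_k along it. In terms of these
   coordinates S_(i,j,m+1) = x_(i,m+1) x_(j,m+1) (G_j - G_i), so the right-hand
   side telescopes to (G_m - G_1) x_(1,m+1) ... x_(m,m+1), which is the
   left-hand side. *)
From mathcomp Require Import all_boot all_order all_algebra.
From mathcomp Require Import all_classical all_reals all_analysis.
From mathcomp Require Import ring.
Set Implicit Arguments. Unset Strict Implicit. Unset Printing Implicit Defensive.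
Import Order.TTheory GRing.Theory Num.Theory.
Local Open Scope ring_scope.

Lemma weighted_telescope (F : fieldType) (S : nat -> nat -> F) (x G : nat -> F)
    (m : nat) :
  (1 < m)%N ->
  (forall k, (1 <= k <= m)%N -> x k != 0) ->
  (forall i j, (1 <= i <= m)%N -> (1 <= j <= m)%N ->
     S i j = x i * x j * (G j - G i)) ->
  S 1%N m * \prod_(2 <= i < m) x i
  = \sum_(1 <= j < m) S j j.+1 * (\prod_(1 <= k < m.+1) x k / (x j * x j.+1)).
Proof.
move=> m_gt1 x_neq0 S_E; set Px := \prod_(1 <= k < m.+1) x k.
have m_ge1 : (1 <= m)%N := ltnW m_gt1.
have Px_E : Px = x 1%N * \prod_(2 <= i < m) x i * x m.
  by rewrite /Px big_ltn // big_nat_recr //= mulrA.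
have step j : (1 <= j < m)%N ->
    S j j.+1 * (Px / (x j * x j.+1)) = (G j.+1 - G j) * Px.
  case/andP=> j_ge1 j_ltm.
  have j_le : (1 <= j <= m)%N by rewrite j_ge1 ltnW.
  have j1_le : (1 <= j.+1 <= m)%N by rewrite j_ltm.
  rewrite S_E //; field.
  by rewrite !x_neq0.
rewrite (eq_big_nat _ _ step) -big_distrl /= telescope_sumr //.
have one_le : (1 <= 1 <= m)%N by rewrite leqnn.
have m_le : (1 <= m <= m)%N by rewrite m_ge1 leqnn.
rewrite S_E // Px_E; ring.
Qed.

Section Concyclic.

Variable R : realType.

Definition on_circle (c : R * R) (r : R) (a : R * R) : Prop :=
  (a.1 - c.1) ^+ 2 + (a.2 - c.2) ^+ 2 = r ^+ 2.

Lemma on_circle_polar (c : R * R) (r t : R) :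
  on_circle c r (c.1 + r * cos t, c.2 + r * sin t).
Proof.
rewrite /on_circle /=.
transitivity (r ^+ 2 * (cos t ^+ 2 + sin t ^+ 2)); first ring.
by rewrite cos2Dsin2 mulr1.
Qed.

Variable A : nat -> R * R.

Lemma sqdist_eq0 (k p : nat) : (sqdist A k p == 0) = (A k == A p).
Proof.
rewrite /sqdist paddr_eq0 ?sqr_ge0 // !sqrf_eq0 !subr_eq0.
by case: (A k) (A p) => a b [a' b']; rewrite xpair_eqE eq_sym [b' == b]eq_sym.
Qed.

Variables (c : R * R) (r : R).

Lemma sqdist_concyclic (k p : nat) :
  on_circle c r (A k) -> on_circle c r (A p) ->
  sqdist A k p = 2 * (((A k).1 - (A p).1) * (c.1 - (A p).1)
                      + ((A k).2 - (A p).2) * (c.2 - (A p).2)).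
Proof.
rewrite /on_circle /sqdist => Ak Ap; apply/eqP; rewrite -subr_eq0; apply/eqP.
transitivity (((A k).1 - c.1) ^+ 2 + ((A k).2 - c.2) ^+ 2
              - (((A p).1 - c.1) ^+ 2 + ((A p).2 - c.2) ^+ 2)); first ring.
by rewrite Ak Ap subrr.
Qed.

(* Up to the factor 1 / r^2, the coordinate of the image of A_k under the
   inversion of centre A_p and radius 1, measured along the line (orthogonal
   to c - A_p) onto which this inversion maps the circle. *)
Definition inv_coord (p k : nat) : R :=
  (((A k).1 - (A p).1) * ((A p).2 - c.2) + ((A k).2 - (A p).2) * (c.1 - (A p).1))
  / (sqdist A k p * r ^+ 2).

Lemma sarea_concyclic (i j p : nat) :
  r != 0 ->
  on_circle c r (A i) -> on_circle c r (A j) -> on_circle c r (A p) ->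
  sqdist A i p != 0 -> sqdist A j p != 0 ->
  sarea A i j p = sqdist A i p * sqdist A j p * (inv_coord p j - inv_coord p i).
Proof.
move=> r_neq0 Ai Aj Ap xi_neq0 xj_neq0.
have r2_neq0 : r ^+ 2 != 0 by rewrite expf_neq0.
pose a k := ((A k).1 - (A p).1) * ((A p).2 - c.2)
            + ((A k).2 - (A p).2) * (c.1 - (A p).1).
have area_r2 : sarea A i j p * r ^+ 2 = sqdist A i p * a j - sqdist A j p * a i.
  rewrite -{1}Ap (sqdist_concyclic Ai Ap) (sqdist_concyclic Aj Ap) /sarea /a.
  ring.
apply: (mulIf r2_neq0); rewrite area_r2 /inv_coord -/(a i) -/(a j).
by field; rewrite xi_neq0 xj_neq0 r_neq0.
Qed.

End Concyclic.

Theorem theorem2p9 (R : realType) (m : nat) (A : nat -> R * R) :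
  (2 <= m)%N ->
  cyclic_anticlockwise m.+1 A ->
  sarea A 1 m m.+1 * \prod_(2 <= i < m) sqdist A i m.+1
  = \sum_(1 <= j < m)
      sarea A j j.+1 m.+1 *
      ((\prod_(1 <= k < m.+1) sqdist A k m.+1)
       / (sqdist A j m.+1 * sqdist A j.+1 m.+1)).
Proof.
move=> m_ge2 [A_inj [c [r [theta [r_gt0 [A_polar _]]]]]].
have on_c k : (1 <= k <= m.+1)%N -> on_circle c r (A k).
  by move=> /A_polar ->; apply: on_circle_polar.
have le_mS k : (1 <= k <= m)%N -> (1 <= k <= m.+1)%N.
  by case/andP=> -> /leqW.
have r_neq0 : r != 0 by rewrite gt_eqF.
have last_le : (1 <= m.+1 <= m.+1)%N by rewrite leqnn.
have x_neq0 k : (1 <= k <= m)%N -> sqdist A k m.+1 != 0.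
  move=> k_le; rewrite sqdist_eq0; apply/eqP/A_inj => //; first exact: le_mS.
  by move=> k_eq; move: k_le; rewrite k_eq ltnn andbF.
apply: (@weighted_telescope _ (fun i j => sarea A i j m.+1)
          (fun k => sqdist A k m.+1) (inv_coord A c r m.+1)) => // i j i_le j_le.
by apply: sarea_concyclic; rewrite ?x_neq0 //; apply: on_c => //; apply: le_mS.
Qed.
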